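(* Let $\mathsf V$ be a quantale in which $k=\top$ is the top element, $X=(X,a)$ a $\mathsf V$-category, $s=(x_n)_{n\in\mathbb N}$ a Cauchy sequence in $X$ and $x\in X$ such that $s$ converges to $x$. Then $x^*=\psi_s$, i.e. $a(y,x)=\bigvee_N\bigwedge_{n\ge N}a(y,x_n)$ for all $y\in X$.
   Context: A quantale $(\mathsf V,\otimes,k)$ is a complete anti-symmetric lattice with an associative, commutative operation $\otimes$ with neutral element $k$ distributing over arbitrary suprema. A $\mathsf V$-category $(X,a)$ is a set with $a:X\times X\to\mathsf V$ such that $k\le a(x,x)$ and $a(x,y)\otimes a(y,z)\le a(x,z)$. A sequence $s=(x_n)$ is Cauchy if $k\le\bigvee_N\bigwedge_{n,m\ge N}a(x_n,x_m)$; $\psi_s(y)=\bigvee_N\bigwedge_{n\ge N}a(y,x_n)$. For $M\subseteq X$, $\overline M=\{z\in X\mid k\le\bigvee_{y\in M}a(z,y)\otimes a(y,z)\}$; $s$ converges to $x$ if $x\in\overline{\{x_n\mid n\in M\}}$ for every infinite $M\subseteq\mathbb N$. *)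

From Stdlib Require Import Arith.

Record quantale := Quantale {
  qcar :> Type;
  qle : qcar -> qcar -> Prop;
  qle_refl : forall u, qle u u;
  qle_trans : forall u v w, qle u v -> qle v w -> qle u w;
  qle_antisym : forall u v, qle u v -> qle v u -> u = v;
  qsup : (qcar -> Prop) -> qcar;
  qsup_ub : forall (S : qcar -> Prop) u, S u -> qle u (qsup S);
  qsup_least : forall (S : qcar -> Prop) w,
      (forall u, S u -> qle u w) -> qle (qsup S) w;
  qtens : qcar -> qcar -> qcar;
  qtens_assoc : forall u v w, qtens u (qtens v w) = qtens (qtens u v) w;
  qtens_comm : forall u v, qtens u v = qtens v u;
  qk : qcar;
  qtens_k : forall u, qtens qk u = u;
  qtens_sup : forall u (S : qcar -> Prop),
      qtens u (qsup S) = qsup (fun w => exists v, S v /\ w = qtens u v)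
}.

Arguments qle {V} : rename.
Arguments qsup {V} : rename.
Arguments qtens {V} : rename.
Arguments qk {V} : rename.

Section Q.
Variable V : quantale.

Definition qinf (S : V -> Prop) : V := qsup (fun w => forall u, S u -> qle w u).

Definition supI {I : Type} (f : I -> V) : V := qsup (fun w => exists i, w = f i).
Definition infI {I : Type} (f : I -> V) : V := qinf (fun w => exists i, w = f i).

Definition qtop : V := qsup (fun _ => True).

Definition is_Vcat {X : Type} (a : X -> X -> V) : Prop :=
  (forall x, qle qk (a x x)) /\
  (forall x y z, qle (qtens (a x y) (a y z)) (a x z)).

Section VC.
Variables (X : Type) (a : X -> X -> V).

Definition cauchy (s : nat -> X) : Prop :=
  qle qk (supI (fun N : nat =>
     infI (fun nm : {p : nat * nat | N <= fst p /\ N <= snd p} =>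
             a (s (fst (proj1_sig nm))) (s (snd (proj1_sig nm)))))).

Definition psi (s : nat -> X) (y : X) : V :=
  supI (fun N : nat => infI (fun n : {n : nat | N <= n} => a y (s (proj1_sig n)))).

Definition closure (M : X -> Prop) (z : X) : Prop :=
  qle qk (supI (fun y : {y : X | M y} =>
             qtens (a z (proj1_sig y)) (a (proj1_sig y) z))).

Definition infinite_nat (M : nat -> Prop) : Prop :=
  forall N, exists n, N <= n /\ M n.

Definition converges_to (s : nat -> X) (x : X) : Prop :=
  forall M : nat -> Prop, infinite_nat M ->
    closure (fun z => exists n, M n /\ z = s n) x.

End VC.
End Q.

(* Since k is the top element, the quantale is integral: u ⊗ v lies below both
   u and v, so factors may be dropped freely. Convergence of s to x makes x
   adherent to every tail {x_m | m >= N}, i.e. k <= \/_{m >= N} a(x,x_m) ⊗ a(x_m,x);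
   tensoring with this supremum transfers an estimate through x_m to x.
   Combined with the Cauchy condition this gives k <= psi_s(x), whence
   a(y,x) = a(y,x) ⊗ k <= a(y,x) ⊗ psi_s(x) <= psi_s(y). Conversely
   /\_{n >= N} a(y,x_n) ⊗ a(x_m,x) <= a(y,x_m) ⊗ a(x_m,x) <= a(y,x) for m >= N. *)
From Stdlib Require Import Lia.

Section Quantale.
Variable V : quantale.

Lemma qinf_lb (S : V -> Prop) u : S u -> qle (qinf V S) u.
Proof. intros Hu. apply qsup_least. intros w Hw. apply Hw, Hu. Qed.

Lemma qinf_greatest (S : V -> Prop) w :
  (forall u, S u -> qle w u) -> qle w (qinf V S).
Proof. intros H. apply qsup_ub. exact H. Qed.

Lemma infI_lb {I : Type} (f : I -> V) i : qle (infI V f) (f i).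
Proof. apply qinf_lb. exists i. reflexivity. Qed.

Lemma supI_ub {I : Type} (f : I -> V) i : qle (f i) (supI V f).
Proof. apply qsup_ub. exists i. reflexivity. Qed.

Lemma qtens_k_r (u : V) : qtens u qk = u.
Proof. rewrite qtens_comm. apply qtens_k. Qed.

(* Monotonicity comes from distributivity over the two-element supremum {v, w}. *)
Lemma qtens_mono_r (u v w : V) : qle v w -> qle (qtens u v) (qtens u w).
Proof.
  intros Hvw.
  assert (Hsup : qsup (fun z => z = v \/ z = w) = w).
  { apply qle_antisym.
    - apply qsup_least. intros z [-> | ->]; [exact Hvw | apply qle_refl].
    - apply qsup_ub. right; reflexivity. }
  rewrite <- Hsup, qtens_sup. apply qsup_ub. exists v. split; [left|]; reflexivity.
Qed.

Lemma qtens_mono_l (u v w : V) : qle u v -> qle (qtens u w) (qtens v w).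
Proof. intros Huv. rewrite !(qtens_comm _ _ w). apply qtens_mono_r, Huv. Qed.

Lemma le_qtens_of_k_le (u v : V) : qle qk v -> qle u (qtens u v).
Proof. intros Hv. rewrite <- (qtens_k_r u) at 1. apply qtens_mono_r, Hv. Qed.

Lemma le_of_qtens_supI_le {I : Type} (f : I -> V) u w :
  qle qk (supI V f) -> (forall i, qle (qtens u (f i)) w) -> qle u w.
Proof.
  intros Hf Hi. apply qle_trans with (qtens u (supI V f)).
  - apply le_qtens_of_k_le, Hf.
  - unfold supI. rewrite qtens_sup. apply qsup_least.
    intros z [v [[i ->] ->]]. apply Hi.
Qed.

Section Integral.
Hypothesis Hk : @qk V = qtop V.

Lemma le_qk (u : V) : qle u qk.
Proof. rewrite Hk. apply qsup_ub. exact I. Qed.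

Lemma qtens_le_l (u v : V) : qle (qtens u v) u.
Proof. rewrite <- (qtens_k_r u) at 2. apply qtens_mono_r, le_qk. Qed.

Lemma qtens_le_r (u v : V) : qle (qtens u v) v.
Proof. rewrite qtens_comm. apply qtens_le_l. Qed.

End Integral.
End Quantale.

Section VCategory.
Variables (V : quantale) (X : Type) (a : X -> X -> V) (s : nat -> X).
Hypothesis a_trans : forall x y z, qle (qtens (a x y) (a y z)) (a x z).

Lemma infinite_nat_ge N : infinite_nat (fun m => N <= m).
Proof. intros N'. exists (Nat.max N N'). split; lia. Qed.

Lemma le_psi_of_tail N y w :
  (forall n, N <= n -> qle w (a y (s n))) -> qle w (psi V X a s y).
Proof.
  intros Hw. eapply qle_trans; [|apply (supI_ub V _ N)].
  apply qinf_greatest. intros u [[n Hn] ->]. apply Hw, Hn.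
Qed.

Lemma qtens_psi_le y x : qle (qtens (a y x) (psi V X a s x)) (psi V X a s y).
Proof.
  unfold psi at 1, supI. rewrite qtens_sup. apply qsup_least.
  intros z [v [[N ->] ->]]. apply le_psi_of_tail with N. intros n Hn.
  eapply qle_trans; [|apply a_trans].
  apply qtens_mono_r, (infI_lb V (fun n : {n | N <= n} => a x (s (proj1_sig n))) (exist _ n Hn)).
Qed.

Lemma le_psi_of_k_le_psi y x :
  qle qk (psi V X a s x) -> qle (a y x) (psi V X a s y).
Proof.
  intros Hx. eapply qle_trans; [apply le_qtens_of_k_le, Hx|]. apply qtens_psi_le.
Qed.

Lemma le_of_converges_tail x N u w :
  converges_to V X a s x ->
  (forall m, N <= m -> qle (qtens u (qtens (a x (s m)) (a (s m) x))) w) ->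
  qle u w.
Proof.
  intros Hx Hm. apply (le_of_qtens_supI_le V _ _ _ (Hx _ (infinite_nat_ge N))).
  intros [z [m [HNm ->]]]. apply Hm, HNm.
Qed.

Section Integral.
Hypothesis Hk : @qk V = qtop V.

Lemma k_le_psi_limit x :
  cauchy V X a s -> converges_to V X a s x -> qle qk (psi V X a s x).
Proof.
  intros Hs Hx. eapply qle_trans; [apply Hs|]. apply qsup_least.
  intros c [N ->]. apply le_psi_of_tail with N. intros n Hn.
  apply le_of_converges_tail with x N; [exact Hx|]. intros m Hm.
  rewrite qtens_assoc. eapply qle_trans; [apply qtens_le_l, Hk|].
  rewrite qtens_comm. eapply qle_trans; [|apply a_trans].
  apply qtens_mono_r.
  exact (infI_lb V (fun nm : {p : nat * nat | N <= fst p /\ N <= snd p} =>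
           a (s (fst (proj1_sig nm))) (s (snd (proj1_sig nm))))
           (exist _ (m, n) (conj Hm Hn))).
Qed.

Lemma psi_le_limit x y :
  converges_to V X a s x -> qle (psi V X a s y) (a y x).
Proof.
  intros Hx. apply qsup_least. intros b [N ->].
  apply le_of_converges_tail with x N; [exact Hx|]. intros m Hm.
  eapply qle_trans; [apply qtens_mono_r, qtens_le_r, Hk|].
  eapply qle_trans; [|apply a_trans]. apply qtens_mono_l.
  exact (infI_lb V (fun n : {n | N <= n} => a y (s (proj1_sig n))) (exist _ m Hm)).
Qed.

End Integral.
End VCategory.

Theorem corollary3p18 (V : quantale) (Hk : @qk V = qtop V)
  (X : Type) (a : X -> X -> V) (Ha : is_Vcat V a)
  (s : nat -> X) (Hs : cauchy V X a s) (x : X) (Hx : converges_to V X a s x) :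
  forall y : X, a y x = psi V X a s y.
Proof.
  destruct Ha as [_ a_trans]. intros y. apply qle_antisym.
  - apply le_psi_of_k_le_psi; [exact a_trans|].
    apply k_le_psi_limit; assumption.
  - apply psi_le_limit; assumption.
Qed.
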